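(* Let $\mathcal{S}=\langle\mathcal{L},\vdash\rangle$ be a logical structure and $\varrho\subseteq\mathcal{P}(\mathcal{L})\times\mathcal{L}$. (i) $\langle\mathcal{L},\vdash^\varrho\rangle$ and $\langle\mathcal{L},\vdash^{p\varrho}\rangle$ are monotonic. (ii) If $\mathcal{S}$ is monotonic, then $\vdash^\varrho\,\subseteq\,\vdash$ and $\vdash^{p\varrho}\,\subseteq\,\vdash$. (iii) $(\vdash^\varrho)^\varrho\,=\,\vdash^\varrho$ and $(\vdash^{p\varrho})^{p\varrho}\,=\,\vdash^{p\varrho}$.
   Context: A logical structure is a pair $\langle\mathcal{L},\vdash\rangle$ where $\mathcal{L}$ is a set and $\vdash\subseteq\mathcal{P}(\mathcal{L})\times\mathcal{L}$ (no further conditions). It is monotonic if $\Gamma\vdash\alpha$ and $\Gamma\subseteq\Sigma$ imply $\Sigma\vdash\alpha$. For $\varrho\subseteq\mathcal{P}(\mathcal{L})\times\mathcal{L}$, the $\varrho$-companion $\vdash^\varrho$ is defined by: $\Gamma\vdash^\varrho\alpha$ iff there is $\Delta\subseteq\Gamma$ with $(\Delta,\alpha)\in\varrho$ and $\Delta\vdash\alpha$. The pure $\varrho$-companion $\vdash^{p\varrho}$ is defined by: $\Gamma\vdash^{p\varrho}\alpha$ iff there is a nonempty $\Delta\subseteq\Gamma$ with $(\Delta,\alpha)\in\varrho$ and $\Delta\vdash\alpha$. $(\vdash^\varrho)^\varrho$ is the $\varrho$-companion of $\langle\mathcal{L},\vdash^\varrho\rangle$, and similarly for the pure case. *)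

Definition lset (L : Type) := L -> Prop.
Definition crel (L : Type) := lset L -> L -> Prop.

Definition subset {L : Type} (A B : lset L) : Prop := forall x, A x -> B x.

Definition nonempty {L : Type} (A : lset L) : Prop := exists x, A x.

Definition monotonic {L : Type} (vd : crel L) : Prop :=
  forall (Gamma Sigma : lset L) (a : L), vd Gamma a -> subset Gamma Sigma -> vd Sigma a.

Definition companion {L : Type} (rho vd : crel L) : crel L :=
  fun Gamma a => exists Delta : lset L, subset Delta Gamma /\ rho Delta a /\ vd Delta a.

Definition pcompanion {L : Type} (rho vd : crel L) : crel L :=
  fun Gamma a => exists Delta : lset L,
    nonempty Delta /\ subset Delta Gamma /\ rho Delta a /\ vd Delta a.

Definition rsubset {L : Type} (r s : crel L) : Prop := forall G a, r G a -> s G a.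
Definition requiv {L : Type} (r s : crel L) : Prop := forall G a, r G a <-> s G a.


(* Both companions are monotonic because their witness [Delta] only has to be
   contained in [Gamma], and a monotonic relation contains its companions.
   Idempotence follows: the companion of a companion is contained in it since
   the companion is monotonic, and conversely every witness [Delta] of
   [Gamma |-^rho a] is its own witness of [Delta |-^rho a]. *)

Lemma subset_refl {L : Type} (A : lset L) : subset A A.
Proof. intros x Hx; exact Hx. Qed.

Lemma subset_trans {L : Type} (A B C : lset L) :
  subset A B -> subset B C -> subset A C.
Proof. intros HAB HBC x Hx; apply HBC, HAB, Hx. Qed.

Section Companions.

Variables (L : Type) (rho : crel L).

Lemma companion_monotonic (vd : crel L) : monotonic (companion rho vd).
Proof.
  intros G S a [D [HDG [Hrho Hvd]]] HGS.
  exists D; split; [exact (subset_trans D G S HDG HGS) | split; assumption].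
Qed.

Lemma pcompanion_monotonic (vd : crel L) : monotonic (pcompanion rho vd).
Proof.
  intros G S a [D [Hne [HDG [Hrho Hvd]]]] HGS.
  exists D; split; [exact Hne | split; [exact (subset_trans D G S HDG HGS) | split; assumption]].
Qed.

Lemma companion_sub (vd : crel L) : monotonic vd -> rsubset (companion rho vd) vd.
Proof. intros Hmono G a [D [HDG [_ Hvd]]]; exact (Hmono D G a Hvd HDG). Qed.

Lemma pcompanion_sub (vd : crel L) : monotonic vd -> rsubset (pcompanion rho vd) vd.
Proof. intros Hmono G a [D [_ [HDG [_ Hvd]]]]; exact (Hmono D G a Hvd HDG). Qed.

Lemma companion_self (vd : crel L) (D : lset L) (a : L) :
  rho D a -> vd D a -> companion rho vd D a.
Proof. intros Hrho Hvd; exists D; split; [apply subset_refl | split; assumption]. Qed.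

Lemma pcompanion_self (vd : crel L) (D : lset L) (a : L) :
  nonempty D -> rho D a -> vd D a -> pcompanion rho vd D a.
Proof.
  intros Hne Hrho Hvd.
  exists D; split; [exact Hne | split; [apply subset_refl | split; assumption]].
Qed.

Lemma companion_idem (vd : crel L) :
  requiv (companion rho (companion rho vd)) (companion rho vd).
Proof.
  intros G a; split.
  - apply companion_sub, companion_monotonic.
  - intros [D [HDG [Hrho Hvd]]].
    exists D; split; [exact HDG | split; [exact Hrho | exact (companion_self vd D a Hrho Hvd)]].
Qed.

Lemma pcompanion_idem (vd : crel L) :
  requiv (pcompanion rho (pcompanion rho vd)) (pcompanion rho vd).
Proof.
  intros G a; split.
  - apply pcompanion_sub, pcompanion_monotonic.
  - intros [D [Hne [HDG [Hrho Hvd]]]].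
    exists D; split; [exact Hne | split; [exact HDG | split; [exact Hrho |]]].
    exact (pcompanion_self vd D a Hne Hrho Hvd).
Qed.

End Companions.

Theorem theorem3p6 (L : Type) (vd rho : crel L) :
  (monotonic (companion rho vd) /\ monotonic (pcompanion rho vd)) /\
  (monotonic vd -> rsubset (companion rho vd) vd /\ rsubset (pcompanion rho vd) vd) /\
  (requiv (companion rho (companion rho vd)) (companion rho vd) /\
   requiv (pcompanion rho (pcompanion rho vd)) (pcompanion rho vd)).
Proof.
  split; [| split].
  - split; [apply companion_monotonic | apply pcompanion_monotonic].
  - intros Hmono; split; [apply companion_sub | apply pcompanion_sub]; exact Hmono.
  - split; [apply companion_idem | apply pcompanion_idem].
Qed.
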